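(* For $1<p\le 2$ and $1\le q\le 2$, the pair $(\ell_p^2(\mathbb{R}),\ell_q^2(\mathbb{R}))$ fails the uniform sBPBp.
   Context: $\ell_p^2(\mathbb{R})$ denotes $\mathbb{R}^2$ with the norm $\|(x,y)\|_p=(|x|^p+|y|^p)^{1/p}$; $S_X$ is the unit sphere of $X$ and $\mathcal{L}(X,Y)$ the bounded linear operators. A pair of Banach spaces $(X,Y)$ has the uniform strong Bishop–Phelps–Bollobás property (uniform sBPBp) if for every $\varepsilon>0$ there exists $\eta(\varepsilon)>0$ such that whenever $T\in\mathcal{L}(X,Y)$ with $\|T\|=1$ and $x_0\in S_X$ satisfy $\|T(x_0)\|>1-\eta(\varepsilon)$, there exists $x_1\in S_X$ with $\|T(x_1)\|=1$ and $\|x_1-x_0\|<\varepsilon$. *)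

From Stdlib Require Import Reals.
Open Scope R_scope.

(* Real power a^r for a >= 0, with the convention 0^r = 0 (r > 0 in all uses).
   Stdlib's Rpower is only meaningful for a > 0. *)
Definition rpow (a r : R) : R :=
  if Rle_dec a 0 then 0 else Rpower a r.

Definition vec := (R * R)%type.

Definition vsub (u v : vec) : vec := (fst u - fst v, snd u - snd v).

Definition lpnorm (p : R) (v : vec) : R :=
  rpow (rpow (Rabs (fst v)) p + rpow (Rabs (snd v)) p) (1 / p).

(* Linear operators on R^2 (every linear map R^2 -> R^2 is bounded),
   represented by their matrix [[a, b], [c, d]]. *)
Record op2 := mkOp { oa : R; ob : R; oc : R; od : R }.

Definition app (T : op2) (v : vec) : vec :=
  (oa T * fst v + ob T * snd v, oc T * fst v + od T * snd v).

Definition opnorm_is (p q : R) (T : op2) (c : R) : Prop :=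
  is_lub (fun r => exists x : vec, lpnorm p x = 1 /\ r = lpnorm q (app T x)) c.

Definition uniform_sBPBp (p q : R) : Prop :=
  forall eps : R, 0 < eps ->
  exists eta : R, 0 < eta /\
    forall (T : op2) (x0 : vec),
      opnorm_is p q T 1 ->
      lpnorm p x0 = 1 ->
      lpnorm q (app T x0) > 1 - eta ->
      exists x1 : vec,
        lpnorm p x1 = 1 /\ lpnorm q (app T x1) = 1 /\
        lpnorm p (vsub x1 x0) < eps.

(* The operator T = 2^(-1/q) [[1, c], [1, -c]] (0 < c < 1) factors as the
   diagonal map (x, y) |-> (x, c y), which strictly shrinks the l_p norm of
   every vector off the first axis, followed by the scaled Hadamard map
   (a, b) |-> 2^(-1/q) (a + b, a - b), which is a contraction from l_p^2 to
   l_q^2 because ||.||_2 <= ||.||_p for p <= 2 and t |-> t^(q/2) is concave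
   for q <= 2.  Hence ||T|| = 1 is attained only on the first axis, while
   ||T e2|| = c is arbitrarily close to 1 and e2 lies at distance >= 1 from
   the first axis. *)
From Stdlib Require Import Reals Lra.
Open Scope R_scope.

Lemma rpow_nonpos a r : a <= 0 -> rpow a r = 0.
Proof. intros Ha; unfold rpow; destruct (Rle_dec a 0); lra. Qed.

Lemma rpow_Rpower a r : 0 < a -> rpow a r = Rpower a r.
Proof. intros Ha; unfold rpow; destruct (Rle_dec a 0); [lra | reflexivity]. Qed.

Lemma rpow_ge0 a r : 0 <= rpow a r.
Proof. unfold rpow; destruct (Rle_dec a 0); [lra | left; apply exp_pos]. Qed.

Lemma rpow_gt0 a r : 0 < a -> 0 < rpow a r.
Proof. intros Ha; rewrite rpow_Rpower by exact Ha; apply exp_pos. Qed.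

Lemma rpow_1_l r : rpow 1 r = 1.
Proof. rewrite rpow_Rpower by lra; unfold Rpower; rewrite ln_1, Rmult_0_r; apply exp_0. Qed.

Lemma rpow_1_r a : 0 <= a -> rpow a 1 = a.
Proof.
  intros [Ha | <-]; [rewrite rpow_Rpower by exact Ha; apply Rpower_1, Ha |].
  apply rpow_nonpos; lra.
Qed.

Lemma rpow_le_compat a b r : 0 < r -> a <= b -> rpow a r <= rpow b r.
Proof.
  intros Hr Hab; destruct (Rle_dec a 0) as [Ha | Ha].
  - rewrite rpow_nonpos by exact Ha; apply rpow_ge0.
  - rewrite !rpow_Rpower by lra; apply Rle_Rpower_l; lra.
Qed.

Lemma rpow_lt_compat a b r : 0 < r -> 0 < b -> a < b -> rpow a r < rpow b r.
Proof.
  intros Hr Hb Hab; destruct (Rle_dec a 0) as [Ha | Ha].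
  - rewrite rpow_nonpos by exact Ha; apply rpow_gt0, Hb.
  - rewrite !rpow_Rpower by lra; apply Rlt_Rpower_l; lra.
Qed.

Lemma rpow_mul c a r : 0 < c -> 0 <= a -> rpow (c * a) r = Rpower c r * rpow a r.
Proof.
  intros Hc [Ha | <-].
  - rewrite !rpow_Rpower by nra; symmetry; apply Rpower_mult_distr; lra.
  - rewrite Rmult_0_r, !(rpow_nonpos 0) by lra; ring.
Qed.

Lemma rpow_rpow a r s : 0 <= a -> rpow (rpow a r) s = rpow a (r * s).
Proof.
  intros [Ha | <-].
  - rewrite (rpow_Rpower a r), rpow_Rpower by (try apply exp_pos; exact Ha).
    rewrite Rpower_mult, rpow_Rpower by exact Ha; reflexivity.
  - rewrite !(rpow_nonpos 0) by lra; reflexivity.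
Qed.

Lemma rpow_abs_sqr t r : rpow (Rabs t) r = rpow (t * t) (r / 2).
Proof.
  destruct (Req_dec t 0) as [-> | Ht].
  - rewrite Rabs_R0, Rmult_0_r, !rpow_nonpos by lra; reflexivity.
  - assert (Habs : 0 < Rabs t) by (apply Rabs_pos_lt, Ht).
    assert (Hsq : t * t = Rabs t * Rabs t) by (rewrite <- Rabs_mult, Rabs_right; nra).
    rewrite Hsq, !rpow_Rpower by nra; unfold Rpower; rewrite ln_mult by exact Habs.
    f_equal; field.
Qed.

(* Weighted AM-GM t^r 1^(1-r) <= r t + (1 - r): add r and 1 - r times the
   tangent bounds e^z >= 1 + z at ln t - r ln t and at - r ln t. *)
Lemma Rpower_le_affine t r : 0 < t -> 0 <= r <= 1 -> Rpower t r <= 1 - r + r * t.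
Proof.
  intros Ht Hr; unfold Rpower; set (m := r * ln t).
  assert (Et : t = exp m * exp (ln t - m)) by (rewrite <- exp_plus, <- (exp_ln t) at 1; [f_equal; ring | exact Ht]).
  assert (E1 : 1 = exp m * exp (- m)) by (rewrite <- exp_plus, <- exp_0; f_equal; ring).
  pose proof (exp_ineq1_le (ln t - m)); pose proof (exp_ineq1_le (- m)); pose proof (exp_pos m).
  assert (exp m * (1 + (ln t - m)) <= t) by (rewrite Et at 2; apply Rmult_le_compat_l; lra).
  assert (exp m * (1 + - m) <= 1) by (rewrite E1 at 2; apply Rmult_le_compat_l; lra).
  assert (exp m = r * (exp m * (1 + (ln t - m))) + (1 - r) * (exp m * (1 + - m))) by (unfold m; ring).
  nra.
Qed.

Lemma rpow_le_tangent a m r : 0 <= a -> 0 < m -> 0 <= r <= 1 ->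
  rpow a r <= Rpower m r * (1 - r + r * (a / m)).
Proof.
  intros Ha Hm Hr.
  assert (Hmr : 0 < Rpower m r) by apply exp_pos.
  destruct Ha as [Ha | <-].
  - assert (Ham : 0 < a / m) by (apply Rdiv_lt_0_compat; assumption).
    replace a with (m * (a / m)) at 1 by (field; lra).
    rewrite rpow_mul, rpow_Rpower by lra.
    apply Rmult_le_compat_l; [lra | apply Rpower_le_affine; assumption].
  - rewrite rpow_nonpos by lra; unfold Rdiv; rewrite Rmult_0_l, Rmult_0_r, Rplus_0_r.
    apply Rmult_le_pos; lra.
Qed.

Lemma rpow_midpoint_concave a b r : 0 <= a -> 0 <= b -> 0 <= r <= 1 ->
  rpow a r + rpow b r <= 2 * rpow ((a + b) / 2) r.
Proof.
  intros Ha Hb Hr; destruct (Req_dec (a + b) 0) as [Hab | Hab].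
  - replace a with 0 by lra; replace b with 0 by lra.
    rewrite !rpow_nonpos by lra; lra.
  - set (m := (a + b) / 2); assert (Hm : 0 < m) by (unfold m; lra).
    pose proof (rpow_le_tangent a m r Ha Hm Hr); pose proof (rpow_le_tangent b m r Hb Hm Hr).
    rewrite (rpow_Rpower m) by exact Hm.
    assert (Rpower m r * (1 - r + r * (a / m)) + Rpower m r * (1 - r + r * (b / m))
            = 2 * Rpower m r) by (unfold m; field; lra).
    lra.
Qed.

Lemma rpow_ge_self t r : 0 <= t <= 1 -> 0 < r <= 1 -> t <= rpow t r.
Proof.
  intros Ht Hr; destruct (Req_dec t 0) as [-> | Ht0]; [apply rpow_ge0 |].
  destruct (Req_dec t 1) as [-> | Ht1]; [rewrite rpow_1_l; lra |].
  assert (Hln : ln t < 0) by (rewrite <- ln_1; apply ln_increasing; lra).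
  rewrite rpow_Rpower by lra; unfold Rpower; rewrite <- (exp_ln t) at 1 by lra.
  destruct (Rle_lt_or_eq_dec _ _ (proj2 Hr)) as [Hr1 | ->].
  - left; apply exp_increasing; nra.
  - rewrite Rmult_1_l; lra.
Qed.

Lemma rpow_subadditive a b r : 0 <= a -> 0 <= b -> 0 < r <= 1 ->
  rpow (a + b) r <= rpow a r + rpow b r.
Proof.
  intros Ha Hb Hr; destruct (Req_dec (a + b) 0) as [Hab | Hab].
  - rewrite rpow_nonpos by lra; pose proof (rpow_ge0 a r); pose proof (rpow_ge0 b r); lra.
  - set (s := a + b); assert (Hs : 0 < s) by (unfold s; lra).
    assert (Hsr : 0 < Rpower s r) by apply exp_pos.
    assert (Has : 0 <= a / s <= 1) by (assert (a = s * (a / s)) by (field; lra); unfold s in *; nra).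
    assert (Hbs : 0 <= b / s <= 1) by (assert (b = s * (b / s)) by (field; lra); unfold s in *; nra).
    replace (rpow a r) with (rpow (s * (a / s)) r) by (f_equal; field; lra).
    replace (rpow b r) with (rpow (s * (b / s)) r) by (f_equal; field; lra).
    rewrite !rpow_mul, (rpow_Rpower s) by lra.
    pose proof (rpow_ge_self _ r Has Hr); pose proof (rpow_ge_self _ r Hbs Hr).
    assert (a / s + b / s = 1) by (unfold s; field; lra).
    nra.
Qed.

Definition lpsum (p : R) (v : vec) : R :=
  rpow (Rabs (fst v)) p + rpow (Rabs (snd v)) p.

Lemma lpnorm_lpsum p v : lpnorm p v = rpow (lpsum p v) (1 / p).
Proof. reflexivity. Qed.

Lemma lpnorm_e1 p : lpnorm p (1, 0) = 1.
Proof.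
  unfold lpnorm; simpl; rewrite Rabs_R1, Rabs_R0, rpow_1_l, (rpow_nonpos 0), Rplus_0_r by lra.
  apply rpow_1_l.
Qed.

Lemma lpnorm_e2 p : lpnorm p (0, 1) = 1.
Proof.
  unfold lpnorm; simpl; rewrite Rabs_R1, Rabs_R0, rpow_1_l, (rpow_nonpos 0), Rplus_0_l by lra.
  apply rpow_1_l.
Qed.

Lemma lpnorm_ge_Rabs_snd p v : 0 < p -> Rabs (snd v) <= lpnorm p v.
Proof.
  intros Hp; rewrite lpnorm_lpsum.
  rewrite <- (rpow_1_r (Rabs (snd v))) at 1 by apply Rabs_pos.
  replace 1 with (p * (1 / p)) at 1 by (field; lra).
  rewrite <- rpow_rpow by apply Rabs_pos.
  apply rpow_le_compat; [apply Rdiv_lt_0_compat; lra |].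
  unfold lpsum; pose proof (rpow_ge0 (Rabs (fst v)) p); lra.
Qed.

Lemma lpnorm2_eq v : lpnorm 2 v = rpow (fst v * fst v + snd v * snd v) (1 / 2).
Proof.
  rewrite lpnorm_lpsum; unfold lpsum; rewrite !rpow_abs_sqr.
  replace (2 / 2) with 1 by field; rewrite !rpow_1_r by apply Rle_0_sqr; reflexivity.
Qed.

Lemma lpnorm2_le_lpnorm p v : 0 < p <= 2 -> lpnorm 2 v <= lpnorm p v.
Proof.
  intros Hp; rewrite lpnorm2_eq, lpnorm_lpsum.
  set (w := fst v * fst v + snd v * snd v).
  assert (Hw : 0 <= w) by (unfold w; pose proof (Rle_0_sqr (fst v)); pose proof (Rle_0_sqr (snd v)); unfold Rsqr in *; lra).
  replace (1 / 2) with (p / 2 * (1 / p)) by (field; lra).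
  rewrite <- rpow_rpow by exact Hw.
  apply rpow_le_compat; [apply Rdiv_lt_0_compat; lra |].
  unfold lpsum, w; rewrite !rpow_abs_sqr.
  apply rpow_subadditive; try apply Rle_0_sqr; split; lra.
Qed.

Lemma lpsum_squeeze_snd p c v : 0 < c ->
  lpsum p (fst v, c * snd v) = rpow (Rabs (fst v)) p + Rpower c p * rpow (Rabs (snd v)) p.
Proof.
  intros Hc; unfold lpsum; simpl.
  rewrite Rabs_mult, (Rabs_right c), rpow_mul by (try apply Rabs_pos; lra); reflexivity.
Qed.

Lemma Rpower_lt_1 c r : 0 < c < 1 -> 0 < r -> Rpower c r < 1.
Proof. intros Hc Hr; rewrite <- (rpow_1_l r), rpow_Rpower by lra; apply Rlt_Rpower_l; lra. Qed.

Lemma lpnorm_squeeze_snd_le p c v : 0 < p -> 0 < c < 1 ->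
  lpnorm p (fst v, c * snd v) <= lpnorm p v.
Proof.
  intros Hp Hc; rewrite !lpnorm_lpsum, lpsum_squeeze_snd by lra.
  apply rpow_le_compat; [apply Rdiv_lt_0_compat; lra |].
  pose proof (Rpower_lt_1 c p Hc Hp); pose proof (rpow_ge0 (Rabs (snd v)) p).
  unfold lpsum; nra.
Qed.

Lemma lpnorm_squeeze_snd_lt p c v : 0 < p -> 0 < c < 1 -> snd v <> 0 ->
  lpnorm p (fst v, c * snd v) < lpnorm p v.
Proof.
  intros Hp Hc Hv; rewrite !lpnorm_lpsum, lpsum_squeeze_snd by lra.
  pose proof (Rpower_lt_1 c p Hc Hp); pose proof (rpow_ge0 (Rabs (fst v)) p).
  pose proof (rpow_gt0 (Rabs (snd v)) p (Rabs_pos_lt _ Hv)).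
  apply rpow_lt_compat; [apply Rdiv_lt_0_compat; lra | unfold lpsum; lra | unfold lpsum; nra].
Qed.

Definition hadamard_scale (q : R) : R := Rpower (/ 2) (/ q).

Definition hadamard (q : R) : op2 :=
  mkOp (hadamard_scale q) (hadamard_scale q) (hadamard_scale q) (- hadamard_scale q).

Lemma app_hadamard q a b :
  app (hadamard q) (a, b) = (hadamard_scale q * (a + b), hadamard_scale q * (a - b)).
Proof. unfold app; simpl; f_equal; ring. Qed.

Lemma rpow_abs_hadamard_scale q t : 0 < q ->
  rpow (Rabs (hadamard_scale q * t)) q = / 2 * rpow (Rabs t) q.
Proof.
  intros Hq; assert (Hk : 0 < hadamard_scale q) by apply exp_pos.
  rewrite Rabs_mult, (Rabs_right (hadamard_scale q)), rpow_mul by (try apply Rabs_pos; lra).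
  unfold hadamard_scale; rewrite Rpower_mult.
  replace (/ q * q) with 1 by (field; lra); rewrite Rpower_1 by lra; reflexivity.
Qed.

Lemma lpnorm_hadamard_eq q a b : 0 < q -> Rabs (a - b) = Rabs (a + b) ->
  lpnorm q (app (hadamard q) (a, b)) = Rabs (a + b).
Proof.
  intros Hq Hab; rewrite app_hadamard, lpnorm_lpsum; unfold lpsum; simpl.
  rewrite !rpow_abs_hadamard_scale, Hab by exact Hq.
  replace (/ 2 * rpow (Rabs (a + b)) q + / 2 * rpow (Rabs (a + b)) q)
    with (rpow (Rabs (a + b)) q) by field.
  rewrite rpow_rpow by apply Rabs_pos.
  replace (q * (1 / q)) with 1 by (field; lra); apply rpow_1_r, Rabs_pos.
Qed.

(* Midpoint concavity of t |-> t^(q/2) applied to (a+b)^2 and (a-b)^2, whose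
   mean is a^2 + b^2: a Clarkson-type inequality. *)
Lemma lpnorm_hadamard_le_lpnorm2 q v : 0 < q <= 2 ->
  lpnorm q (app (hadamard q) v) <= lpnorm 2 v.
Proof.
  intros Hq; destruct v as [a b]; rewrite app_hadamard, lpnorm_lpsum, lpnorm2_eq; simpl.
  replace (1 / 2) with (q / 2 * (1 / q)) by (field; lra).
  rewrite <- rpow_rpow by (pose proof (Rle_0_sqr a); pose proof (Rle_0_sqr b); unfold Rsqr in *; lra).
  apply rpow_le_compat; [apply Rdiv_lt_0_compat; lra |].
  unfold lpsum; simpl; rewrite !rpow_abs_hadamard_scale, !rpow_abs_sqr by lra.
  pose proof (rpow_midpoint_concave _ _ (q / 2) (Rle_0_sqr (a + b)) (Rle_0_sqr (a - b))
                ltac:(split; lra)) as Hmid.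
  replace (((a + b)² + (a - b)²) / 2) with (a * a + b * b) in Hmid by (unfold Rsqr; field).
  unfold Rsqr in Hmid; lra.
Qed.

Lemma lpnorm_hadamard_le p q v : 0 < p <= 2 -> 0 < q <= 2 ->
  lpnorm q (app (hadamard q) v) <= lpnorm p v.
Proof.
  intros Hp Hq; eapply Rle_trans;
    [apply lpnorm_hadamard_le_lpnorm2, Hq | apply lpnorm2_le_lpnorm, Hp].
Qed.

Definition witness_op (q c : R) : op2 :=
  mkOp (hadamard_scale q) (hadamard_scale q * c) (hadamard_scale q) (- (hadamard_scale q * c)).

Lemma app_witness_op q c v :
  app (witness_op q c) v = app (hadamard q) (fst v, c * snd v).
Proof. unfold app; simpl; f_equal; ring. Qed.

Section WitnessOperator.

Variables p q c : R.
Hypothesis hp : 0 < p <= 2.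
Hypothesis hq : 0 < q <= 2.
Hypothesis hc : 0 < c < 1.

Lemma witness_op_le v : lpnorm q (app (witness_op q c) v) <= lpnorm p v.
Proof.
  rewrite app_witness_op; eapply Rle_trans;
    [apply (lpnorm_hadamard_le p); assumption | apply lpnorm_squeeze_snd_le; lra].
Qed.

Lemma witness_op_lt v : snd v <> 0 -> lpnorm q (app (witness_op q c) v) < lpnorm p v.
Proof.
  intros Hv; rewrite app_witness_op; eapply Rle_lt_trans;
    [apply (lpnorm_hadamard_le p); assumption | apply lpnorm_squeeze_snd_lt; lra].
Qed.

Lemma witness_op_e1 : lpnorm q (app (witness_op q c) (1, 0)) = 1.
Proof.
  rewrite app_witness_op; simpl; rewrite Rmult_0_r, lpnorm_hadamard_eq by (try lra; f_equal; ring).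
  rewrite Rplus_0_r; apply Rabs_R1.
Qed.

Lemma witness_op_e2 : lpnorm q (app (witness_op q c) (0, 1)) = c.
Proof.
  rewrite app_witness_op; simpl; rewrite Rmult_1_r, lpnorm_hadamard_eq.
  - rewrite Rplus_0_l; apply Rabs_right; lra.
  - lra.
  - rewrite Rplus_0_l, Rminus_0_l; apply Rabs_Ropp.
Qed.

End WitnessOperator.

Lemma opnorm_is_attained p q T x c : lpnorm p x = 1 -> lpnorm q (app T x) = c ->
  (forall y, lpnorm p y = 1 -> lpnorm q (app T y) <= c) -> opnorm_is p q T c.
Proof.
  intros Hx Hc Hmax; split.
  - intros r [y [Hy ->]]; apply Hmax, Hy.
  - intros b Hb; apply Hb; exists x; split; [exact Hx | symmetry; exact Hc].
Qed.

Theorem mainTheorem11 (p q : R) (hp1 : 1 < p) (hp2 : p <= 2)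
    (hq1 : 1 <= q) (hq2 : q <= 2) :
  ~ uniform_sBPBp p q.
Proof.
  intros Hsbpb; destruct (Hsbpb 1 Rlt_0_1) as [eta [Heta Hclose]].
  set (c := 1 - Rmin eta 1 / 2).
  assert (Hc : 0 < c < 1 /\ 1 - eta < c).
  { pose proof (Rmin_l eta 1); pose proof (Rmin_r eta 1); pose proof (Rmin_pos eta 1 Heta Rlt_0_1).
    unfold c; lra. }
  assert (Hp : 0 < p <= 2) by lra; assert (Hq : 0 < q <= 2) by lra.
  assert (Hnorm : opnorm_is p q (witness_op q c) 1).
  { apply (opnorm_is_attained _ _ _ (1, 0)).
    - apply lpnorm_e1.
    - apply witness_op_e1; lra.
    - intros y Hy; rewrite <- Hy; apply witness_op_le; lra. }
  destruct (Hclose (witness_op q c) (0, 1) Hnorm (lpnorm_e2 p)) as [x1 [Hx1 [HTx1 Hdist]]].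
  { rewrite witness_op_e2 by lra; lra. }
  assert (Hsnd : snd x1 = 0).
  { destruct (Req_dec (snd x1) 0) as [H0 | H0]; [exact H0 |].
    pose proof (witness_op_lt p q c Hp Hq (proj1 Hc) x1 H0); lra. }
  pose proof (lpnorm_ge_Rabs_snd p (vsub x1 (0, 1)) (proj1 Hp)) as Hfar.
  replace (Rabs (snd (vsub x1 (0, 1)))) with 1 in Hfar
    by (simpl; rewrite Hsnd, Rminus_0_l, Rabs_Ropp, Rabs_R1; reflexivity).
  lra.
Qed.
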